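(* Let $p\ge 1$, $m=2p$, $j=\mathrm{diag}(I_p,-I_p)$. Fix a function $\theta$ assigning to each $m\times m$ matrix $R$ with $R=R^*>0$, $RjR=j$ a nonzero complex number $\theta(R)$. (i) Let $\{R_k\}_{k\ge0}$ be $m\times m$ matrices with $R_k=R_k^*>0$ and $R_kjR_k=j$, put $\theta_k=\theta(R_k)$, $U_0=I_m$, $U_k=(ijR_0)(ijR_1)\cdots(ijR_{k-1})$ for $k>0$, and $C_k=(U_k^* )^{-1}R_k^2U_k^{-1}$. Then $C_k>0$, $C_k=C_k^*$ and $C_kjC_k=j$ for all $k$, and whenever $X_k(z)$ solves the block Szeg\''o recurrence $X_{k+1}(z)=\theta_kR_k\,\mathrm{diag}(zI_p,I_p)X_k(z)$, the function $$W_k(\lambda)=\frac{(i-\lambda^{-1})^k}{\prod_{r=0}^{k-1}\theta_r}\,U_k\,\mathrm{diag}(zI_p,I_p)\,X_k(z),\qquad z=\frac{1+i\lambda}{1-i\lambda},$$ solves the discrete Dirac system $W_{k+1}(\lambda)-W_k(\lambda)=-\frac{i}{\lambda}jC_kW_k(\lambda)$. (ii) Conversely, let $\{C_k\}_{k\ge0}$ be $m\times m$ matrices with $C_k>0$, $C_k=C_k^*$, $C_kjC_k=j$. Define recursively $U_0=I_m$, $R_k=(U_k^*C_kU_k)^{1/2}$ (positive square root), $U_{k+1}=U_k(ijR_k)$. Then $R_k=R_k^*>0$, $R_kjR_k=j$ and $C_k=(U_k^* )^{-1}R_k^2U_k^{-1}$ for all $k$. Consequently the maps in (i) and (ii) are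 mutually inverse, giving a one-to-one correspondence between such Dirac type systems (with $C_k>0$) and block Szeg\''o recurrences with $R_k>0$, $\theta_k=\theta(R_k)$.
   Context: $I_p$ denotes the $p\times p$ identity matrix. For a positive definite matrix, $(\cdot)^{1/2}$ is its positive definite square root. *)

(* complex scalars are an arbitrary numClosedFieldType C
   (e.g. C = R[i]); matrices are 'M[C]_(p + p). *)
From Stdlib Require Import ClassicalEpsilon.
From HB Require Import structures.
From mathcomp Require Import all_boot all_order all_algebra.
Set Implicit Arguments. Unset Strict Implicit. Unset Printing Implicit Defensive.
Import Order.TTheory GRing.Theory Num.Theory Num.Def.
Import Num.Syntax.
Local Open Scope ring_scope.

Section Defs.
Variable C : numClosedFieldType.

Definition adjmx (m n : nat) (A : 'M[C]_(m, n)) : 'M[C]_(n, m) :=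
  (map_mx conjC A)^T.

Definition posdef (n : nat) (A : 'M[C]_n) : Prop :=
  A = adjmx A /\ forall v : 'rV[C]_n, v != 0 -> 0 < (v *m A *m adjmx v) 0 0.

Definition sqrtpd (n : nat) (A : 'M[C]_n) : 'M[C]_n :=
  epsilon (inhabits 0) (fun S : 'M[C]_n => posdef S /\ S *m S = A).

Definition jmx (p : nat) : 'M[C]_(p + p) := block_mx 1%:M 0 0 (- 1%:M).

Definition diagz (p : nat) (z : C) : 'M[C]_(p + p) := block_mx (z%:M) 0 0 1%:M.

Fixpoint Useq (p : nat) (R : nat -> 'M[C]_(p + p)) (k : nat) : 'M[C]_(p + p) :=
  match k with
  | 0 => 1%:M
  | k'.+1 => Useq R k' *m ('i *: jmx p *m R k')
  end.

Definition Cseq (p : nat) (R : nat -> 'M[C]_(p + p)) (k : nat) : 'M[C]_(p + p) :=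
  invmx (adjmx (Useq R k)) *m (R k *m R k) *m invmx (Useq R k).

Fixpoint Useq2 (p : nat) (Cs : nat -> 'M[C]_(p + p)) (k : nat) : 'M[C]_(p + p) :=
  match k with
  | 0 => 1%:M
  | k'.+1 => Useq2 Cs k' *m
      ('i *: jmx p *m sqrtpd (adjmx (Useq2 Cs k') *m Cs k' *m Useq2 Cs k'))
  end.

Definition Rseq2 (p : nat) (Cs : nat -> 'M[C]_(p + p)) (k : nat) : 'M[C]_(p + p) :=
  sqrtpd (adjmx (Useq2 Cs k) *m Cs k *m Useq2 Cs k).

Definition Wfun (p q : nat) (theta : 'M[C]_(p + p) -> C) (R : nat -> 'M[C]_(p + p))
    (X : nat -> C -> 'M[C]_(p + p, q)) (k : nat) (lam : C) : 'M[C]_(p + p, q) :=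
  let z := (1 + 'i * lam) / (1 - 'i * lam) in
  (('i - lam^-1) ^+ k / \prod_(r < k) theta (R r)) *: (Useq R k *m diagz p z *m X k z).

End Defs.

Arguments jmx {C} p.
Arguments diagz {C} p z.

From HB Require Import structures.
From mathcomp Require Import all_boot all_order all_algebra.
From mathcomp Require Import sesquilinear spectral.
From mathcomp Require Import ring.
From Stdlib Require Import ClassicalEpsilon.
Import Order.TTheory GRing.Theory Num.Theory Num.Def.
Import Num.Syntax.
Local Open Scope ring_scope.
Set Implicit Arguments. Unset Strict Implicit. Unset Printing Implicit Defensive.

(* The factors i j R_k are j-unitary (U j U^* = j = U^* j U), hence so are the
   U_k, and congruence by a j-unitary matrix preserves the positive definite A
   with A j A = j; this gives C_k > 0, C_k j C_k = j, and likewise for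
   U_k^* C_k U_k in (ii).  The positive square root S of such an A again
   satisfies S j S = j, since j S^-1 j is another positive square root of
   A = j A^-1 j.  Uniqueness of positive square roots makes the two
   constructions mutually inverse.  For the Dirac system, the Cayley transform
   z = (1 + i lam)/(1 - i lam) gives diag(z, 1) = (1 - i lam)^-1 (1 + i lam j),
   and with (j R_k)^2 = 1 one Szego step becomes one Dirac step. *)

Lemma mulmxA3 (R : pzRingType) m n1 n2 n3 n4 (X : 'M[R]_(m, n1)) (A : 'M_(n1, n2))
    (B : 'M_(n2, n3)) (D : 'M_(n3, n4)) (Y : 'M_(n1, n4)) :
  A *m B *m D = Y -> X *m A *m B *m D = X *m Y.
Proof. by move=> <-; rewrite !mulmxA. Qed.

Section PositiveDefinite.
Variable C : numClosedFieldType.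
Implicit Types m n : nat.

Lemma adjmxE m n (A : 'M[C]_(m, n)) : adjmx A = (A ^t conjC)%sesqui.
Proof. by rewrite /adjmx map_trmx. Qed.

Lemma adjmxK m n (A : 'M[C]_(m, n)) : adjmx (adjmx A) = A.
Proof. by apply/matrixP => i k; rewrite !mxE conjCK. Qed.

Lemma adjmxM m n l (A : 'M[C]_(m, n)) (B : 'M[C]_(n, l)) :
  adjmx (A *m B) = adjmx B *m adjmx A.
Proof. by rewrite /adjmx map_mxM trmx_mul. Qed.

Lemma adjmxZ m n a (A : 'M[C]_(m, n)) : adjmx (a *: A) = a^* *: adjmx A.
Proof. by apply/matrixP => i k; rewrite !mxE rmorphM. Qed.

Lemma adjmxB m n (A B : 'M[C]_(m, n)) : adjmx (A - B) = adjmx A - adjmx B.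
Proof. by apply/matrixP => i k; rewrite !mxE rmorphB. Qed.

Lemma adjmx1 n : adjmx (1%:M : 'M[C]_n) = 1%:M.
Proof. by rewrite /adjmx map_mx1 trmx1. Qed.

Lemma adjmx_diag n (d : 'rV[C]_n) :
  (forall i, 0 <= d 0 i) -> adjmx (diag_mx d) = diag_mx d.
Proof.
move=> d_ge0; apply/matrixP => i k; rewrite !mxE.
by case: (eqVneq i k) => [->|_]; rewrite ?mulr1n ?geC0_conj ?mulr0n ?rmorph0.
Qed.

Lemma adjmx_unit n (A : 'M[C]_n) : (adjmx A \in unitmx) = (A \in unitmx).
Proof. by rewrite /adjmx unitmx_tr map_unitmx. Qed.

Lemma adjmx_inv n (A : 'M[C]_n) : adjmx (invmx A) = invmx (adjmx A).
Proof. by rewrite /adjmx map_invmx trmx_inv. Qed.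

Lemma adj_congrK n (U M : 'M[C]_n) : U \in unitmx ->
  invmx (adjmx U) *m (adjmx U *m M *m U) *m invmx U = M.
Proof.
by move=> uU; rewrite !mulmxA mulVmx ?adjmx_unit // mul1mx mulmxK.
Qed.

Lemma adj_congrKV n (U M : 'M[C]_n) : U \in unitmx ->
  adjmx U *m (invmx (adjmx U) *m M *m invmx U) *m U = M.
Proof.
by move=> uU; rewrite !mulmxA mulmxV ?adjmx_unit // mul1mx mulmxKV.
Qed.

Lemma hermitian_spectral n (A : 'M[C]_n) : A = adjmx A ->
  exists P (d : 'rV_n), P *m adjmx P = 1%:M /\ A = adjmx P *m diag_mx d *m P.
Proof.
move=> hA; have /orthomx_spectralP eA : A \is normalmx.
  by apply/normalmxP; rewrite -adjmxE -hA.
have uP := spectral_unitarymx A.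
exists (spectralmx A), (spectral_diag A); rewrite adjmxE -invmx_unitary //.
by split=> //; rewrite mulmxV ?unitarymx_unit.
Qed.

Lemma posdef1 n : posdef (1%:M : 'M[C]_n).
Proof.
split=> [|v v0]; first by rewrite adjmx1.
by rewrite mulmx1 adjmxE -dotmxE dnorm_gt0.
Qed.

Lemma posdef_congruence n (A Q : 'M[C]_n) :
  posdef A -> Q \in unitmx -> posdef (Q *m A *m adjmx Q).
Proof.
move=> [hA A_gt0] uQ; split=> [|v v0]; first by rewrite !adjmxM adjmxK -hA mulmxA.
have vQ0 : v *m Q != 0 by apply: contra v0 => /eqP vQ; rewrite -(mulmxK uQ v) vQ mul0mx.
by have := A_gt0 _ vQ0; rewrite adjmxM !mulmxA.
Qed.

Lemma posdef_diag_gt0 n (A : 'M[C]_n) i : posdef A -> 0 < A i i.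
Proof.
move=> [_ A_gt0]; set e : 'rV[C]_n := delta_mx 0 i.
have e0 : e != 0 by apply/eqP => /matrixP /(_ 0 i) /eqP; rewrite !mxE !eqxx oner_eq0.
have -> : A i i = (e *m A *m adjmx e) 0 0.
  by rewrite -rowE adjmxE trmx_delta /= map_delta_mx -colE !mxE.
exact: A_gt0.
Qed.

Lemma posdef_diag_mx n (d : 'rV[C]_n) : (forall i, 0 < d 0 i) -> posdef (diag_mx d).
Proof.
move=> d_gt0; pose s := \row_i sqrtC (d 0 i).
have s_gt0 i : 0 < s 0 i by rewrite mxE sqrtC_gt0.
have -> : diag_mx d = diag_mx s *m 1%:M *m adjmx (diag_mx s).
  rewrite mulmx1 adjmx_diag => [|i]; last exact: ltW.
  by rewrite mulmx_diag; congr diag_mx; apply/rowP => i; rewrite !mxE -expr2 sqrtCK.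
apply: posdef_congruence; first exact: posdef1.
rewrite unitmxE det_diag unitfE; apply/prodf_neq0 => i _.
by rewrite gt_eqF.
Qed.

Lemma posdef_spectral n (A : 'M[C]_n) : posdef A ->
  exists P (d : 'rV_n),
    [/\ P *m adjmx P = 1%:M, A = adjmx P *m diag_mx d *m P & forall i, 0 < d 0 i].
Proof.
move=> pA; have [P [d [PP eA]]] := hermitian_spectral pA.1.
exists P, d; split=> // i; have [uP _] := mulmx1_unit PP.
have := posdef_diag_gt0 i (posdef_congruence pA uP).
by rewrite eA !mulmxA PP mul1mx -mulmxA PP mulmx1 mxE eqxx mulr1n.
Qed.

Lemma posdef_sqrt_exists n (A : 'M[C]_n) : posdef A -> exists S, posdef S /\ S *m S = A.
Proof.
move=> /posdef_spectral [P [d [PP -> d_gt0]]].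
pose s := \row_i sqrtC (d 0 i).
have [_ uPa] := mulmx1_unit PP.
exists (adjmx P *m diag_mx s *m P); split.
  have := posdef_congruence (posdef_diag_mx _) uPa; rewrite adjmxK; apply=> i.
  by rewrite mxE sqrtC_gt0.
rewrite -!mulmxA (mulmxA P) PP mul1mx (mulmxA (diag_mx s)) mulmx_diag.
by congr (_ *m (diag_mx _ *m _)); apply/rowP => i; rewrite !mxE -expr2 sqrtCK.
Qed.

Lemma posdef_sylvester_diag_eq0 n (S T : 'M[C]_n) (d : 'rV[C]_n) :
  posdef S -> posdef T -> S *m diag_mx d + diag_mx d *m T = 0 -> d = 0.
Proof.
move=> pS pT /matrixP e; apply/rowP => i; have := e i i.
rewrite mul_mx_diag mul_diag_mx !mxE mulrC -mulrDr => /eqP.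
have /gt_eqF ST_neq0 := addr_gt0 (posdef_diag_gt0 i pS) (posdef_diag_gt0 i pT).
by rewrite mulf_eq0 ST_neq0 orbF => /eqP.
Qed.

(* D = S - T is hermitian with S D + D T = 0; conjugating into an eigenbasis
   of D makes this a Sylvester equation with a diagonal unknown. *)
Lemma posdef_sqrt_unique n (S T : 'M[C]_n) :
  posdef S -> posdef T -> S *m S = T *m T -> S = T.
Proof.
move=> pS pT eST; apply/eqP; rewrite -subr_eq0; apply/eqP; set D := S - T.
have hD : D = adjmx D by rewrite adjmxB -pS.1 -pT.1.
have SD_DT : S *m D + D *m T = 0 by rewrite mulmxBr mulmxBl eST addrA subrK subrr.
have [P [d [PP eD]]] := hermitian_spectral hD.
have [uP _] := mulmx1_unit PP.
suff d0 : d = 0 by rewrite eD d0 linear0 mulmx0 mul0mx.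
apply: (posdef_sylvester_diag_eq0 (posdef_congruence pS uP) (posdef_congruence pT uP)).
have := congr1 (fun M => P *m M *m adjmx P) SD_DT; rewrite /= mulmx0 mul0mx.
by rewrite mulmxDr mulmxDl eD !mulmxA PP mul1mx -!mulmxA PP mulmx1 !mulmxA.
Qed.

Lemma sqrtpdP n (A : 'M[C]_n) : posdef A ->
  posdef (sqrtpd A) /\ sqrtpd A *m sqrtpd A = A.
Proof. by move=> /posdef_sqrt_exists; apply: epsilon_spec. Qed.

Lemma posdef_sq n (S : 'M[C]_n) : posdef S -> S \in unitmx -> posdef (S *m S).
Proof. by move=> pS uS; have := posdef_congruence (posdef1 n) uS; rewrite mulmx1 -pS.1. Qed.

Lemma sqrtpd_sq n (S : 'M[C]_n) : posdef S -> S \in unitmx -> sqrtpd (S *m S) = S.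
Proof.
move=> pS uS; have [pR eR] := sqrtpdP (posdef_sq pS uS).
exact: posdef_sqrt_unique.
Qed.

Lemma posdef_inv n (S : 'M[C]_n) : posdef S -> S \in unitmx -> posdef (invmx S).
Proof.
move=> pS uS; have := posdef_congruence pS (_ : invmx S \in unitmx).
by rewrite adjmx_inv -pS.1 mulVmx // mul1mx; apply; rewrite unitmx_inv.
Qed.

End PositiveDefinite.

Section JUnitary.
Variables (C : numClosedFieldType) (p : nat).
Notation j := (jmx p : 'M[C]_(p + p)).
Implicit Types A R U V : 'M[C]_(p + p).

Lemma jmx_sq : j *m j = 1%:M.
Proof.
rewrite /jmx mulmx_block !mulmx0 !mul0mx !addr0 !add0r mulmx1 mulmxN mulmx1 opprK.
by rewrite -scalar_mx_block.
Qed.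

Lemma jmx_unit : j \in unitmx.
Proof. by case: (mulmx1_unit jmx_sq). Qed.

Lemma adjmx_jmx : adjmx j = j.
Proof.
by rewrite /adjmx /jmx map_block_mx tr_block_mx !map_mx0 !trmx0 map_mxN map_mx1 linearN /= trmx1.
Qed.

Lemma jmx_mulKV m (X : 'M[C]_(m, p + p)) : X *m j *m j = X.
Proof. by rewrite -mulmxA jmx_sq mulmx1. Qed.

Definition junitary U := U *m j *m adjmx U = j /\ adjmx U *m j *m U = j.

Definition jposdef A := posdef A /\ A *m j *m A = j.

Lemma junitary1 : junitary 1%:M.
Proof. by rewrite /junitary adjmx1 mulmx1 mul1mx. Qed.

Lemma junitaryM U V : junitary U -> junitary V -> junitary (U *m V).
Proof.
move=> [U1 U2] [V1 V2]; rewrite /junitary adjmxM !mulmxA.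
by rewrite (mulmxA3 _ V1) (mulmxA3 _ U2) U1 V2.
Qed.

Lemma junitary_adj U : junitary U -> junitary (adjmx U).
Proof. by rewrite /junitary adjmxK => -[]. Qed.

Lemma junitary_unit U : junitary U -> U \in unitmx.
Proof.
move=> [_ U2]; have : (j *m adjmx U) *m (j *m U) = 1%:M.
  by rewrite -!mulmxA (mulmxA (adjmx U)) U2 jmx_sq.
by case/mulmx1_unit => _; rewrite unitmx_mul => /andP[].
Qed.

Lemma junitary_inv_adj U : junitary U -> junitary (invmx (adjmx U)).
Proof.
move=> hU; have [U1 U2] := hU; have uU := junitary_unit hU.
have uUa : adjmx U \in unitmx by rewrite adjmx_unit.
rewrite /junitary adjmx_inv adjmxK; split.
  by rewrite -{1}U2 !mulmxA mulVmx // mul1mx mulmxK.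
by rewrite -{1}U1 !mulmxA mulVmx // mul1mx mulmxK.
Qed.

Lemma jposdef_unit R : jposdef R -> R \in unitmx.
Proof.
move=> [_ hR]; have : (j *m R) *m (j *m R) = 1%:M.
  by rewrite -!mulmxA (mulmxA R) hR jmx_sq.
by case/mulmx1_unit => _; rewrite unitmx_mul => /andP[].
Qed.

Lemma jposdef_congruence V A : junitary V -> jposdef A -> jposdef (V *m A *m adjmx V).
Proof.
move=> hV [pA hA]; have [V1 V2] := hV; split.
  exact: posdef_congruence pA (junitary_unit hV).
by rewrite !mulmxA (mulmxA3 _ V2) (mulmxA3 _ hA) V1.
Qed.

Lemma jposdef_sq R : jposdef R -> jposdef (R *m R).
Proof.
move=> hR; have [pR RjR] := hR; split; first exact: posdef_sq pR (jposdef_unit hR).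
by rewrite !mulmxA (mulmxA3 _ RjR) RjR.
Qed.

(* Both S and j S^-1 j are positive square roots of A = j A^-1 j. *)
Lemma jposdef_sqrtpd A : jposdef A -> jposdef (sqrtpd A).
Proof.
move=> hA; have [pA AjA] := hA; have [pS SS] := sqrtpdP pA; set S := sqrtpd A in pS SS *.
have uS : S \in unitmx by have := jposdef_unit hA; rewrite -SS unitmx_mul => /andP[].
have SiSi : invmx S *m invmx S = j *m A *m j.
  by rewrite -[LHS]mulmx1 -jmx_sq -{1}AjA -{1}SS !mulmxA mulmxKV // mulVmx // mul1mx.
have pT : posdef (j *m invmx S *m j).
  by have := posdef_congruence (posdef_inv pS uS) jmx_unit; rewrite adjmx_jmx.
have ST : S = j *m invmx S *m j.
  apply: posdef_sqrt_unique pS pT _.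
  by rewrite SS !mulmxA jmx_mulKV -(mulmxA j) SiSi !mulmxA jmx_mulKV jmx_sq mul1mx.
by split=> //; rewrite {2}ST !mulmxA jmx_mulKV mulmxV // mul1mx.
Qed.

Lemma ijR_junitary R : jposdef R -> junitary ('i *: j *m R).
Proof.
move=> [[hR _] RjR]; have ii : ('i : C) * 'i^* = 1 by rewrite conjCi mulrN mulCii opprK.
rewrite /junitary adjmxM adjmxZ adjmx_jmx -hR.
rewrite -!scalemxAl -!scalemxAr -!scalemxAl !scalerA ii !scale1r; split.
  by rewrite !mulmxA (mulmxA3 _ RjR) jmx_sq mul1mx.
by rewrite !mulmxA jmx_mulKV RjR.
Qed.

Lemma sqrtpd_adj_congr_jposdef U A : junitary U -> jposdef A ->
  jposdef (sqrtpd (adjmx U *m A *m U)).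
Proof.
move=> hU hA; apply: jposdef_sqrtpd.
by have := jposdef_congruence (junitary_adj hU) hA; rewrite adjmxK.
Qed.

End JUnitary.

Section Correspondence.
Variables (C : numClosedFieldType) (p : nat).
Implicit Types (R Cs : nat -> 'M[C]_(p + p)).

Lemma Useq_junitary R : (forall k, jposdef (R k)) -> forall k, junitary (Useq R k).
Proof.
move=> hR; elim=> [|k IH] /=; first exact: junitary1.
exact: junitaryM IH (ijR_junitary (hR k)).
Qed.

Lemma Cseq_jposdef R : (forall k, jposdef (R k)) -> forall k, jposdef (Cseq R k).
Proof.
move=> hR k; have := jposdef_congruence (junitary_inv_adj (Useq_junitary hR k))
                                         (jposdef_sq (hR k)).
by rewrite adjmx_inv adjmxK.
Qed.

Lemma sqrtpd_Cseq R : (forall k, jposdef (R k)) ->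
  forall k, sqrtpd (adjmx (Useq R k) *m Cseq R k *m Useq R k) = R k.
Proof.
move=> hR k; have uU := junitary_unit (Useq_junitary hR k).
rewrite adj_congrKV // sqrtpd_sq //; [exact: (hR k).1 | exact: jposdef_unit].
Qed.

Lemma Useq2_Cseq R : (forall k, jposdef (R k)) -> forall k, Useq2 (Cseq R) k = Useq R k.
Proof. by move=> hR; elim=> //= k IH; rewrite IH sqrtpd_Cseq. Qed.

Lemma Rseq2_Cseq R : (forall k, jposdef (R k)) -> forall k, Rseq2 (Cseq R) k = R k.
Proof. by move=> hR k; rewrite /Rseq2 Useq2_Cseq // sqrtpd_Cseq. Qed.

Lemma Useq2_junitary Cs : (forall k, jposdef (Cs k)) -> forall k, junitary (Useq2 Cs k).
Proof.
move=> hC; elim=> [|k IH] /=; first exact: junitary1.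
exact/(junitaryM IH)/ijR_junitary/sqrtpd_adj_congr_jposdef.
Qed.

Lemma Rseq2_jposdef Cs : (forall k, jposdef (Cs k)) -> forall k, jposdef (Rseq2 Cs k).
Proof. by move=> hC k; apply: sqrtpd_adj_congr_jposdef (Useq2_junitary hC k) (hC k). Qed.

Lemma Useq_Rseq2 Cs k : Useq (Rseq2 Cs) k = Useq2 Cs k.
Proof. by elim: k => //= k ->. Qed.

Lemma Cseq_Rseq2 Cs : (forall k, jposdef (Cs k)) -> forall k, Cseq (Rseq2 Cs) k = Cs k.
Proof.
move=> hC k; have hU := Useq2_junitary hC k.
have pA : posdef (adjmx (Useq2 Cs k) *m Cs k *m Useq2 Cs k).
  by case: (jposdef_congruence (junitary_adj hU) (hC k)); rewrite adjmxK.
by rewrite /Cseq Useq_Rseq2 /Rseq2 (sqrtpdP pA).2 adj_congrK // junitary_unit.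
Qed.

End Correspondence.

Section Dirac.
Variables (C : numClosedFieldType) (p : nat).
Notation j := (jmx p : 'M[C]_(p + p)).

Lemma diagz_cayley (lam : C) : 1 - 'i * lam != 0 ->
  diagz p ((1 + 'i * lam) / (1 - 'i * lam)) = (1 - 'i * lam)^-1 *: (1%:M + ('i * lam) *: j).
Proof.
move=> h; rewrite /diagz /jmx [1%:M in RHS]scalar_mx_block.
rewrite scale_block_mx add_block_mx scale_block_mx.
congr block_mx; apply/matrixP => x y; rewrite !mxE; case: (x == y) => /=.
all: rewrite ?mulr1n ?mulr0n ?mulr0 ?addr0 ?oppr0 ?mulr1 ?mulrN1 ?mulVf //.
all: by rewrite ?mulr0 ?addr0 ?mulr0 // mulrC.
Qed.

(* With D = (1 - i lam)^-1 (1 + i lam j) and (j R)^2 = 1, j R D R is a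
   combination of j R^2 and 1, and the multiple of D cancels. *)
Lemma dirac_kernel (R : 'M[C]_(p + p)) (lam : C) : lam != 0 -> 1 - 'i * lam != 0 ->
  R *m j *m R = j ->
  let D := diagz p ((1 + 'i * lam) / (1 - 'i * lam)) in
  ('i - lam^-1) *: ('i *: j *m R *m D *m R *m D) - D
    = - ('i / lam) *: (j *m (R *m R) *m D).
Proof.
move=> l0 h RjR D.
set a := (1 - 'i * lam)^-1; set b := 'i * lam.
have jRDR : j *m R *m D *m R = a *: (j *m R *m R + b *: 1%:M).
  rewrite /D (diagz_cayley h) -/a -/b -scalemxAr -scalemxAl mulmxDr mulmxDl mulmx1.
  by rewrite -scalemxAr -scalemxAl -!mulmxA (mulmxA R) RjR jmx_sq.
have ca : ('i - lam^-1) * 'i * a = - ('i / lam) by rewrite /a; field; rewrite h l0.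
have cab : - ('i / lam) * b = 1.
  by rewrite -[RHS]opprK -mulCii /b; field.
rewrite -!scalemxAl (mulmxA j R R) jRDR -scalemxAl scalerA mulmxDl -scalemxAl mul1mx.
by rewrite scalerA ca scalerDr scalerA cab scale1r addrK.
Qed.

Lemma Wfun_step (theta : 'M[C]_(p + p) -> C) (R : nat -> 'M[C]_(p + p)) q
    (X : nat -> C -> 'M[C]_(p + p, q)) k lam :
  junitary (Useq R k) -> R k *m j *m R k = j -> theta (R k) != 0 ->
  (forall z, X k.+1 z = theta (R k) *: (R k *m diagz p z *m X k z)) ->
  lam != 0 -> 1 - 'i * lam != 0 ->
  Wfun theta R X k.+1 lam - Wfun theta R X k lam
   = (- ('i / lam)) *: (j *m Cseq R k *m Wfun theta R X k lam).
Proof.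
move=> hU RjR th0 hX l0 h.
have uU := junitary_unit hU.
have jU : j *m invmx (adjmx (Useq R k)) = Useq R k *m j.
  by rewrite -{1}hU.1 mulmxK // adjmx_unit.
rewrite /Wfun /= hX /Cseq big_ord_recr exprSr /=.
set z := (1 + 'i * lam) / (1 - 'i * lam); set D := diagz p z.
set U := Useq R k in uU jU *; set t := theta (R k).
set c := ('i - lam^-1) ^+ k / \prod_(r < k) theta (R r).
have -> : ('i - lam^-1) ^+ k * ('i - lam^-1) / (\prod_(r < k) theta (R r) * t)
          = c * ('i - lam^-1) / t.
  by rewrite /c invfM !mulrA (mulrAC _ ('i - lam^-1)).
transitivity (c *: (U *m (('i - lam^-1) *: ('i *: j *m R k *m D *m R k *m D) - D) *m X k z)).
  rewrite mulmxBr mulmxBl scalerBr; congr (_ - _).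
  rewrite !(=^~ scalemxAr, =^~ scalemxAl) !scalerA !mulmxA; congr (_ *: _); field.
  by rewrite l0 th0.
rewrite (dirac_kernel l0 h RjR) -/z -/D.
by rewrite -!scalemxAr -!scalemxAl !scalerA mulrC !mulmxA jU mulmxKV.
Qed.

End Dirac.

Theorem proposition2p1 (C : numClosedFieldType) (p : nat) (hp : (0 < p)%N)
    (theta : 'M[C]_(p + p) -> C)
    (htheta : forall R : 'M[C]_(p + p),
        posdef R -> R *m jmx p *m R = jmx p -> theta R != 0) :
  (* (i) *)
  (forall R : nat -> 'M[C]_(p + p),
     (forall k, posdef (R k) /\ R k *m jmx p *m R k = jmx p) ->
     (forall k, posdef (Cseq R k) /\ Cseq R k *m jmx p *m Cseq R k = jmx p) /\
     (forall (q : nat) (X : nat -> C -> 'M[C]_(p + p, q)),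
        (forall k z, X k.+1 z = theta (R k) *: (R k *m diagz p z *m X k z)) ->
        forall k (lam : C), lam != 0 -> 1 - 'i * lam != 0 ->
          Wfun theta R X k.+1 lam - Wfun theta R X k lam
          = (- ('i / lam)) *: (jmx p *m Cseq R k *m Wfun theta R X k lam))) /\
  (* (ii) *)
  (forall Cs : nat -> 'M[C]_(p + p),
     (forall k, posdef (Cs k) /\ Cs k *m jmx p *m Cs k = jmx p) ->
     forall k, posdef (Rseq2 Cs k) /\ Rseq2 Cs k *m jmx p *m Rseq2 Cs k = jmx p /\
       Cs k = invmx (adjmx (Useq2 Cs k)) *m (Rseq2 Cs k *m Rseq2 Cs k)
              *m invmx (Useq2 Cs k)) /\
  (* the two maps are mutually inverse *)
  (forall R : nat -> 'M[C]_(p + p),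
     (forall k, posdef (R k) /\ R k *m jmx p *m R k = jmx p) ->
     forall k, Rseq2 (Cseq R) k = R k) /\
  (forall Cs : nat -> 'M[C]_(p + p),
     (forall k, posdef (Cs k) /\ Cs k *m jmx p *m Cs k = jmx p) ->
     forall k, Cseq (Rseq2 Cs) k = Cs k).
Proof.
split; [|split; [|split]].
- move=> R hR; split; first exact: Cseq_jposdef.
  move=> q X hX k lam l0 h; have [pR RjR] := hR k.
  apply: Wfun_step => //; first exact: Useq_junitary.
  exact: htheta.
- move=> Cs hC k; have [pR RjR] := Rseq2_jposdef hC k.
  by do 2!split=> //; rewrite -Useq_Rseq2; symmetry; apply: Cseq_Rseq2.
- exact: Rseq2_Cseq.
- exact: Cseq_Rseq2.
Qed.
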